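(* Let $r\in\mathcal R$ be a universal proper distance matrix and $(\mathcal U_r,\rho_r)$ the completion of $(\mathbb N,r)$. For any finite set $\{a_1,\dots,a_n\}\subset\mathcal U_r$ and any distance matrix $q$ of order $N>n$ whose upper-left $n\times n$ corner equals $\{\rho_r(a_i,a_j)\}_{i,j=1}^n$, there exist points $a_{n+1},\dots,a_N\in\mathcal U_r$ such that the distance matrix $\{\rho_r(a_i,a_j)\}_{i,j=1}^N$ equals $q$.
   Context: $\mathcal R$ is the set of infinite real matrices $r=\{r_{i,j}\}_{i,j\ge1}$ with $r_{i,i}=0$, $r_{i,j}\ge0$, $r_{i,j}=r_{j,i}$, $r_{i,k}+r_{k,j}\ge r_{i,j}$; a distance matrix of order $N$ is an $N\times N$ matrix with these properties; $r$ is proper if $r_{i,j}>0$ for $i\ne j$; $p_n(r)$ is the upper-left $n\times n$ corner. For an $n\times n$ distance matrix $q$, $A(q)=\{a\in\mathbb R^n:|a_i-a_j|\le q_{i,j}\le a_i+a_j\ \forall i,j\}$. A proper $r\in\mathcal R$ is universal if for every $n$, every $a\in A(p_n(r))$ and every $\epsilon>0$ there is $m\in\mathbb N$ with $\max_{1\le i\le n}|r_{i,m}-a_i|<\epsilon$. *)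

(* concrete real numbers R. Indices are 0-based:
   paper index k (1-based) corresponds to k-1 here. *)
From Stdlib Require Import Reals.
Open Scope R_scope.

Definition is_dist_matrix (N : nat) (q : nat -> nat -> R) : Prop :=
  forall i j k, (i < N)%nat -> (j < N)%nat -> (k < N)%nat ->
    q i i = 0 /\ 0 <= q i j /\ q i j = q j i /\ q i k + q k j >= q i j.

Definition in_calR (r : nat -> nat -> R) : Prop :=
  forall i j k,
    r i i = 0 /\ 0 <= r i j /\ r i j = r j i /\ r i k + r k j >= r i j.

Definition proper (r : nat -> nat -> R) : Prop :=
  forall i j, i <> j -> r i j > 0.

Definition in_A (n : nat) (q : nat -> nat -> R) (a : nat -> R) : Prop :=
  forall i j, (i < n)%nat -> (j < n)%nat ->
    Rabs (a i - a j) <= q i j /\ q i j <= a i + a j.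

(* p_n(r) is the upper-left n x n corner, i.e. r restricted to indices < n *)
Definition universal (r : nat -> nat -> R) : Prop :=
  in_calR r /\ proper r /\
  forall (n : nat) (a : nat -> R), in_A n r a ->
    forall eps, eps > 0 -> exists m : nat,
      forall i, (i < n)%nat -> Rabs (r i m - a i) < eps.

Definition is_metric {U : Type} (rho : U -> U -> R) : Prop :=
  (forall x y, 0 <= rho x y) /\
  (forall x y, rho x y = 0 <-> x = y) /\
  (forall x y, rho x y = rho y x) /\
  (forall x y z, rho x z <= rho x y + rho y z).

Definition is_complete {U : Type} (rho : U -> U -> R) : Prop :=
  forall u : nat -> U,
    (forall eps, eps > 0 -> exists M, forall m k, (m >= M)%nat -> (k >= M)%nat ->
       rho (u m) (u k) < eps) ->
    exists l, forall eps, eps > 0 -> exists M, forall m, (m >= M)%nat ->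
       rho (u m) l < eps.

Definition is_completion (r : nat -> nat -> R) (U : Type) (rho : U -> U -> R)
    (iota : nat -> U) : Prop :=
  is_metric rho /\ is_complete rho /\
  (forall i j, rho (iota i) (iota j) = r i j) /\
  (forall x eps, eps > 0 -> exists m, rho x (iota m) < eps).

From Stdlib Require Import Reals Lra Lia ClassicalEpsilon.
Open Scope R_scope.

(* Given finitely many points x_i of U and distances f_i compatible with them (f lies in
   A of their distance matrix), some point of U is at exactly these distances.  The
   function ext y = min_i (f_i + rho (x_i, y)) is a Katetov function on U extending f, and
   universality together with density approximates a Katetov function at finitely many
   points by a point of N.  If z approximates f up to e, adding z to the x_i with
   prescribed distance min (e, ext z) and approximating again yields z' with error e/2
   and rho (z, z') < 2e; these approximations form a Cauchy sequence whose limit is at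
   exactly the distances f.  The points a_{n+1}, ..., a_N are then added one at a time. *)

Ltac case_Rabs := repeat match goal with
  | |- context [Rabs ?a] => destruct (Rcase_abs a);
      [rewrite (Rabs_left a) by assumption | rewrite (Rabs_right a) by assumption]
  | H : context [Rabs ?a] |- _ => destruct (Rcase_abs a);
      [rewrite (Rabs_left a) in H by assumption | rewrite (Rabs_right a) in H by assumption]
  end.

Fixpoint min_upto (g : nat -> R) (K : nat) : R :=
  match K with
  | O => g O
  | S K' => Rmin (min_upto g K') (g (S K'))
  end.

Lemma min_upto_le g K i : (i <= K)%nat -> min_upto g K <= g i.
Proof.
  induction K as [|K IH]; intros Hi; simpl.
  - replace i with O by lia. lra.
  - destruct (Nat.eq_dec i (S K)) as [->|Hne].
    + apply Rmin_r.
    + eapply Rle_trans; [apply Rmin_l|]. apply IH; lia.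
Qed.

Lemma min_upto_attained g K : exists i, (i <= K)%nat /\ min_upto g K = g i.
Proof.
  induction K as [|K [i [Hi Heq]]]; simpl.
  - exists O; split; auto.
  - apply Rmin_case.
    + exists i; split; auto.
    + exists (S K); split; auto.
Qed.

Lemma half_pow_small e : e > 0 -> exists M, forall t, (t >= M)%nat -> (/2)^t < e.
Proof.
  intros He. destruct (pow_lt_1_zero (/2)) with (y := e) as [M HM]; auto.
  { rewrite Rabs_right; lra. }
  exists M. intros t Ht. specialize (HM t Ht).
  rewrite Rabs_right in HM; [exact HM|]. apply Rle_ge, pow_le; lra.
Qed.

Lemma dependent_choice {A : Type} (P : nat -> A -> Prop) (Rel : nat -> A -> A -> Prop) :
  (exists z, P O z) ->
  (forall t z, P t z -> exists z', P (S t) z' /\ Rel t z z') ->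
  exists s : nat -> A, forall t, P t (s t) /\ Rel t (s t) (s (S t)).
Proof.
  intros [z0 Hz0] Hstep.
  set (next := fun t (w : {z | P t z}) =>
         constructive_indefinite_description _ (Hstep t _ (proj2_sig w))).
  set (seq := fix seq t : {z | P t z} :=
         match t with
         | O => exist _ z0 Hz0
         | S t' => let (z', Hz') := next t' (seq t') in exist _ z' (proj1 Hz')
         end).
  exists (fun t => proj1_sig (seq t)). intros t. split.
  - exact (proj2_sig (seq t)).
  - simpl. destruct (next t (seq t)) as [z' Hz']. exact (proj2 Hz').
Qed.

Definition snoc {A : Type} (x : nat -> A) (k : nat) (z : A) : nat -> A :=
  fun i => if (i <? k)%nat then x i else z.

Lemma snoc_lt {A : Type} (x : nat -> A) k z i : (i < k)%nat -> snoc x k z i = x i.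
Proof. intros Hi. unfold snoc. destruct (Nat.ltb_spec i k); [reflexivity | lia]. Qed.

Lemma snoc_at {A : Type} (x : nat -> A) k z : snoc x k z k = z.
Proof. unfold snoc. destruct (Nat.ltb_spec k k); [lia | reflexivity]. Qed.

Section DistanceMatrix.

Variables (N : nat) (q : nat -> nat -> R).
Hypothesis q_dist : is_dist_matrix N q.

Lemma dist_matrix_diag i : (i < N)%nat -> q i i = 0.
Proof. intros Hi. apply (q_dist i i i); assumption. Qed.

Lemma dist_matrix_sym i j : (i < N)%nat -> (j < N)%nat -> q i j = q j i.
Proof. intros Hi Hj. apply (q_dist i j i); assumption. Qed.

Lemma dist_matrix_triangle i j k :
  (i < N)%nat -> (j < N)%nat -> (k < N)%nat -> q i j <= q i k + q k j.
Proof. intros Hi Hj Hk. apply Rge_le, (q_dist i j k); assumption. Qed.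

Lemma dist_matrix_row_in_A k : (k < N)%nat -> in_A k q (q k).
Proof.
  intros Hk i j Hi Hj.
  pose proof (dist_matrix_triangle k i j Hk ltac:(lia) ltac:(lia)).
  pose proof (dist_matrix_triangle k j i Hk ltac:(lia) ltac:(lia)).
  pose proof (dist_matrix_triangle i j k ltac:(lia) ltac:(lia) Hk).
  rewrite (dist_matrix_sym i k), (dist_matrix_sym j i) in * by lia.
  split; [case_Rabs|]; lra.
Qed.

End DistanceMatrix.

Section Metric.

Variables (U : Type) (rho : U -> U -> R).
Hypothesis rho_metric : is_metric rho.

Lemma dist_ge0 x y : 0 <= rho x y.
Proof. apply rho_metric. Qed.

Lemma dist_xx x : rho x x = 0.
Proof. apply rho_metric. reflexivity. Qed.

Lemma dist_sym x y : rho x y = rho y x.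
Proof. apply rho_metric. Qed.

Lemma dist_triangle x y z : rho x z <= rho x y + rho y z.
Proof. apply rho_metric. Qed.

Definition distances (x : nat -> U) : nat -> nat -> R := fun i j => rho (x i) (x j).

Definition realizes (b : nat -> U) (q : nat -> nat -> R) (k : nat) : Prop :=
  forall i j, (i < k)%nat -> (j < k)%nat -> rho (b i) (b j) = q i j.

Definition katetov (h : U -> R) : Prop :=
  forall x y, Rabs (h x - h y) <= rho x y /\ rho x y <= h x + h y.

Definition katetov_ext (K : nat) (x : nat -> U) (f : nat -> R) (y : U) : R :=
  min_upto (fun i => f i + rho (x i) y) K.

Lemma katetov_ext_katetov K x f : in_A (S K) (distances x) f -> katetov (katetov_ext K x f).
Proof.
  intros Hf y y'. unfold katetov_ext.
  destruct (min_upto_attained (fun i => f i + rho (x i) y) K) as [i [Hi Ei]].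
  destruct (min_upto_attained (fun i => f i + rho (x i) y') K) as [j [Hj Ej]].
  pose proof (min_upto_le (fun i => f i + rho (x i) y) K j Hj).
  pose proof (min_upto_le (fun i => f i + rho (x i) y') K i Hi).
  rewrite Ei, Ej in *.
  destruct (Hf i j) as [_ Hij]; try lia. unfold distances in Hij.
  pose proof (dist_triangle (x j) y' y). pose proof (dist_triangle (x i) y y').
  pose proof (dist_triangle y (x i) y'). pose proof (dist_triangle (x i) (x j) y').
  pose proof (dist_sym y y'). pose proof (dist_sym y (x i)).
  cbn beta in *. split; [case_Rabs|]; lra.
Qed.

Lemma katetov_ext_eq K x f i :
  in_A (S K) (distances x) f -> (i <= K)%nat -> katetov_ext K x f (x i) = f i.
Proof.
  intros Hf Hi. unfold katetov_ext.
  pose proof (min_upto_le (fun j => f j + rho (x j) (x i)) K i Hi) as Hle.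
  destruct (min_upto_attained (fun j => f j + rho (x j) (x i)) K) as [j [Hj Ej]].
  rewrite Ej in *.
  destruct (Hf i j) as [Hij _]; try lia. unfold distances in Hij.
  pose proof (dist_xx (x i)). pose proof (dist_sym (x i) (x j)).
  cbn beta in *. case_Rabs; lra.
Qed.

Lemma in_A_snoc k x f z d :
  in_A k (distances x) f -> 0 <= d ->
  (forall i, (i < k)%nat -> Rabs (f i - d) <= rho (x i) z /\ rho (x i) z <= f i + d) ->
  in_A (S k) (distances (snoc x k z)) (snoc f k d).
Proof.
  intros Hf Hd Hz i j Hi Hj. unfold distances.
  destruct (Nat.lt_ge_cases i k) as [Hik|Hik]; destruct (Nat.lt_ge_cases j k) as [Hjk|Hjk].
  - rewrite !snoc_lt by lia. apply Hf; lia.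
  - replace j with k by lia. rewrite !snoc_at, !snoc_lt by lia. apply Hz; lia.
  - replace i with k by lia. rewrite !snoc_at, !snoc_lt by lia.
    rewrite dist_sym, <- Rabs_Ropp, Ropp_minus_distr, Rplus_comm. apply Hz; lia.
  - replace i with k by lia. replace j with k by lia. rewrite !snoc_at, dist_xx.
    unfold Rminus. rewrite Rplus_opp_r, Rabs_R0. lra.
Qed.

Definition approx_point (x : nat -> U) (f : nat -> R) (k : nat) (e : R) (z : U) : Prop :=
  forall i, (i < k)%nat -> Rabs (rho z (x i) - f i) < e.

Lemma geometric_cauchy (s : nat -> U) c :
  (forall t, rho (s t) (s (S t)) < c * (/2)^t) ->
  forall eps, eps > 0 -> exists M, forall m k, (m >= M)%nat -> (k >= M)%nat ->
    rho (s m) (s k) < eps.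
Proof.
  intros Hstep.
  assert (Hc : 0 <= c).
  { pose proof (Hstep O). pose proof (dist_ge0 (s O) (s 1%nat)). simpl in *. lra. }
  assert (Htail : forall t j, rho (s t) (s (t + j)%nat) <= 2 * c * ((/2)^t - (/2)^(t + j))).
  { intros t j. induction j as [|j IH].
    - rewrite Nat.add_0_r, dist_xx. lra.
    - rewrite Nat.add_succ_r. pose proof (Hstep (t + j)%nat).
      pose proof (dist_triangle (s t) (s (t + j)%nat) (s (S (t + j)))). simpl. lra. }
  assert (Hfar : forall t m, (t <= m)%nat -> rho (s t) (s m) <= 2 * c * (/2)^t).
  { intros t m Htm. replace m with (t + (m - t))%nat by lia.
    pose proof (Htail t (m - t)%nat). pose proof (pow_le (/2) (t + (m - t)) ltac:(lra)).
    nra. }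
  intros eps Heps.
  destruct (half_pow_small (eps / (4 * c + 1))) as [M HM].
  { apply Rdiv_lt_0_compat; lra. }
  specialize (HM M (le_n M)).
  assert (HM' : (4 * c + 1) * (/2)^M < eps).
  { replace eps with ((4 * c + 1) * (eps / (4 * c + 1))) by (field; lra).
    apply Rmult_lt_compat_l; lra. }
  exists M. intros m k Hm Hk.
  pose proof (Hfar M m Hm). pose proof (Hfar M k Hk). pose proof (pow_le (/2) M ltac:(lra)).
  pose proof (dist_triangle (s m) (s M) (s k)). pose proof (dist_sym (s m) (s M)).
  lra.
Qed.

Lemma approx_point_limit x f k (s : nat -> U) l :
  (forall t, approx_point x f k ((/2)^t) (s t)) ->
  (forall eps, eps > 0 -> exists M, forall m, (m >= M)%nat -> rho (s m) l < eps) ->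
  forall i, (i < k)%nat -> rho l (x i) = f i.
Proof.
  intros Hs Hl i Hi. apply cond_eq. intros eps Heps.
  destruct (Hl (eps / 2)) as [M1 HM1]; [lra|].
  destruct (half_pow_small (eps / 2)) as [M2 HM2]; [lra|].
  set (t := Nat.max M1 M2).
  specialize (HM1 t ltac:(lia)). specialize (HM2 t ltac:(lia)). specialize (Hs t i Hi).
  pose proof (dist_triangle l (s t) (x i)). pose proof (dist_triangle (s t) l (x i)).
  pose proof (dist_sym l (s t)).
  case_Rabs; lra.
Qed.

Section Completion.

Variables (r : nat -> nat -> R) (iota : nat -> U).
Hypothesis r_universal : universal r.
Hypothesis rho_completion : is_completion r U rho iota.

Lemma dense_finite (P : nat -> U) k eta : eta > 0 ->
  exists M, forall i, (i < k)%nat -> exists l, (l < M)%nat /\ rho (P i) (iota l) < eta.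
Proof.
  intros Heta. destruct rho_completion as [_ [_ [_ Hdense]]].
  induction k as [|k [M HM]].
  - exists O. intros i Hi. lia.
  - destruct (Hdense (P k) eta Heta) as [m Hm]. exists (Nat.max M (S m)).
    intros i Hi. destruct (Nat.eq_dec i k) as [->|Hne].
    + exists m; split; [lia | exact Hm].
    + destruct (HM i ltac:(lia)) as [l [Hl Hl']]. exists l; split; [lia | exact Hl'].
Qed.

Lemma katetov_approx h : katetov h ->
  forall (P : nat -> U) k eps, eps > 0 ->
  exists m, forall i, (i < k)%nat -> Rabs (rho (iota m) (P i) - h (P i)) < eps.
Proof.
  intros Hh P k eps Heps.
  destruct r_universal as [_ [_ Hu]]. destruct rho_completion as [_ [_ [Hr _]]].
  destruct (dense_finite P k (eps / 3)) as [M HM]; [lra|].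
  destruct (Hu M (fun l => h (iota l))) with (eps := eps / 3) as [m Hm]; [|lra|].
  { intros i j _ _. rewrite <- Hr. apply Hh. }
  exists m. intros i Hi. destruct (HM i Hi) as [l [Hl Hil]].
  specialize (Hm l Hl). cbn beta in Hm. rewrite <- Hr in Hm.
  destruct (Hh (iota l) (P i)) as [Hlip _].
  pose proof (dist_triangle (iota m) (iota l) (P i)).
  pose proof (dist_triangle (iota m) (P i) (iota l)).
  pose proof (dist_sym (iota l) (P i)).
  pose proof (dist_sym (iota l) (iota m)).
  case_Rabs; lra.
Qed.

Lemma in_A_approx K x f : in_A (S K) (distances x) f ->
  forall e, e > 0 -> exists m, approx_point x f (S K) e (iota m).
Proof.
  intros Hf e He.
  destruct (katetov_approx _ (katetov_ext_katetov K x f Hf) x (S K) e He)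
    as [m Hm].
  exists m. intros i Hi.
  rewrite <- (katetov_ext_eq K x f i Hf) by lia. apply Hm, Hi.
Qed.

Lemma approx_point_refine K x f e z : in_A (S K) (distances x) f -> e > 0 ->
  approx_point x f (S K) e z ->
  exists z', approx_point x f (S K) (e / 2) z' /\ rho z z' < 2 * e.
Proof.
  intros Hf He Hz.
  set (d := Rmin e (katetov_ext K x f z)).
  assert (Hd : forall i, (i < S K)%nat ->
            Rabs (f i - d) <= rho (x i) z /\ rho (x i) z <= f i + d).
  { intros i Hi.
    destruct (katetov_ext_katetov K x f Hf (x i) z) as [H1 H2].
    rewrite katetov_ext_eq in H1, H2 by (assumption || lia).
    specialize (Hz i Hi). rewrite dist_sym in Hz.
    pose proof (Rmin_r e (katetov_ext K x f z)) as Hle. revert Hle.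
    unfold d. apply Rmin_case; intros; case_Rabs; lra. }
  assert (Hd0 : 0 <= d) by (destruct (Hd O ltac:(lia)); case_Rabs; lra).
  destruct (in_A_approx (S K) (snoc x (S K) z) (snoc f (S K) d)
              (in_A_snoc _ x f z d Hf Hd0 Hd) (e / 2)) as [m Hm]; [lra|].
  exists (iota m). split.
  - intros i Hi. specialize (Hm i ltac:(lia)). rewrite !snoc_lt in Hm by lia. exact Hm.
  - specialize (Hm (S K) ltac:(lia)). rewrite !snoc_at in Hm.
    assert (d <= e) by apply Rmin_l.
    rewrite dist_sym. case_Rabs; lra.
Qed.

Lemma realize_one_point k x f : in_A k (distances x) f ->
  exists z, forall i, (i < k)%nat -> rho z (x i) = f i.
Proof.
  intros Hf. destruct k as [|K]. { exists (iota O). intros i Hi. lia. }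
  destruct (dependent_choice (fun t z => approx_point x f (S K) ((/2)^t) z)
              (fun t z z' => rho z z' < 2 * (/2)^t)) as [s Hs].
  - destruct (in_A_approx K x f Hf 1) as [m Hm]; [lra|]. exists (iota m). exact Hm.
  - intros t z Hz. replace ((/2)^(S t)) with ((/2)^t / 2) by (simpl; field).
    apply approx_point_refine; [exact Hf | apply pow_lt; lra | exact Hz].
  - destruct rho_completion as [_ [Hcomplete _]].
    destruct (Hcomplete s) as [l Hl].
    { apply (geometric_cauchy s 2). intros t. apply Hs. }
    exists l. apply (approx_point_limit x f (S K) s l); [apply Hs | exact Hl].
Qed.

Lemma realize_extend N q k b : is_dist_matrix N q -> (k < N)%nat -> realizes b q k ->
  exists z, realizes (snoc b k z) q (S k).
Proof.
  intros Hq Hk Hb.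
  destruct (realize_one_point k b (q k)) as [z Hz].
  { intros i j Hi Hj. unfold distances. rewrite Hb by assumption.
    exact (dist_matrix_row_in_A N q Hq k Hk i j Hi Hj). }
  exists z. intros i j Hi Hj.
  destruct (Nat.lt_ge_cases i k) as [Hik|Hik]; destruct (Nat.lt_ge_cases j k) as [Hjk|Hjk].
  - rewrite !snoc_lt by lia. apply Hb; lia.
  - replace j with k by lia. rewrite snoc_at, snoc_lt, dist_sym, Hz by lia.
    apply (dist_matrix_sym N); assumption || lia.
  - replace i with k by lia. rewrite snoc_at, snoc_lt, Hz by lia. reflexivity.
  - replace i with k by lia. replace j with k by lia. rewrite snoc_at, dist_xx.
    symmetry. apply (dist_matrix_diag N); assumption.
Qed.

Lemma realize_upto N q n a : is_dist_matrix N q -> realizes a q n ->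
  forall d, (n + d <= N)%nat ->
  exists b, (forall i, (i < n)%nat -> b i = a i) /\ realizes b q (n + d).
Proof.
  intros Hq Ha d. induction d as [|d IH]; intros Hd.
  - exists a. rewrite Nat.add_0_r. split; [reflexivity | exact Ha].
  - destruct IH as [b [Hba Hb]]; [lia|].
    destruct (realize_extend N q (n + d) b Hq ltac:(lia) Hb) as [z Hz].
    exists (snoc b (n + d) z). rewrite Nat.add_succ_r. split; [|exact Hz].
    intros i Hi. rewrite snoc_lt by lia. apply Hba, Hi.
Qed.

End Completion.

End Metric.

Theorem corollary4 (r : nat -> nat -> R) (U : Type) (rho : U -> U -> R)
    (iota : nat -> U) :
  universal r -> is_completion r U rho iota ->
  forall (n N : nat) (a : nat -> U) (q : nat -> nat -> R),
    (forall i j, (i < n)%nat -> (j < n)%nat -> i <> j -> a i <> a j) ->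
    (n < N)%nat ->
    is_dist_matrix N q ->
    (forall i j, (i < n)%nat -> (j < n)%nat -> q i j = rho (a i) (a j)) ->
    exists b : nat -> U,
      (forall i, (i < n)%nat -> b i = a i) /\
      (forall i j, (i < N)%nat -> (j < N)%nat -> rho (b i) (b j) = q i j).
Proof.
  intros Hu Hc n N a q _ HnN Hq Hcorner.
  assert (Ha : realizes U rho a q n) by (intros i j Hi Hj; symmetry; apply Hcorner; assumption).
  destruct (realize_upto U rho (proj1 Hc) r iota Hu Hc N q n a Hq Ha (N - n))
    as [b [Hba Hb]]; [lia|].
  exists b. split; [exact Hba|].
  intros i j Hi Hj. apply Hb; lia.
Qed.
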